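(* Let $n\ge1$ and let $z_1,\dots,z_n$ be indeterminates. For all integers $m,k\ge0$, \[ \mathrm{monomial}_2(m,k,n)=e_m e_{m+k}+\sum_{i=1}^{m}(-1)^i\,\frac{k+2i}{i}\binom{k+i-1}{i-1}\,e_{m-i}\,e_{m+k+i}. \]
   Context: $e_r$ is the elementary symmetric polynomial of degree $r$ in $z_1,\dots,z_n$, with $e_0=1$ and $e_r=0$ for $r>n$. For integers $m_2,m_1\ge0$, $\mathrm{monomial}_2(m_2,m_1,n)$ is the monomial symmetric polynomial $\sum z^\alpha$ over all exponent vectors $\alpha\in\{0,1,2\}^n$ having exactly $m_2$ entries equal to $2$ and exactly $m_1$ entries equal to $1$. *)

From mathcomp Require Import all_boot all_order all_algebra.
From mathcomp Require Export mpoly.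
Set Implicit Arguments. Unset Strict Implicit. Unset Printing Implicit Defensive.
Import GRing.Theory.
Local Open Scope ring_scope.

(* elementary symmetric polynomial e_r in z_1..z_n over Q: mesym n rat r
   (0 for r > n, 1 for r = 0) *)
Definition e (n r : nat) : {mpoly rat[n]} := mesym n rat r.

Definition monomial2 (m2 m1 n : nat) : {mpoly rat[n]} :=
  \sum_(a : {ffun 'I_n -> 'I_3} |
          (#|[set j | val (a j) == 2%N]| == m2) && (#|[set j | val (a j) == 1%N]| == m1))
     \prod_(j < n) 'X_j ^+ (val (a j)).

From mathcomp Require Import all_boot all_order all_algebra.
From mathcomp Require Import mpoly.
From mathcomp Require Import ring zify.
Import GRing.Theory Num.Theory.
Local Open Scope ring_scope.
Set Implicit Arguments. Unset Strict Implicit. Unset Printing Implicit Defensive.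

(* Expanding e_x e_y over pairs (S, T) of subsets with |S| = x and |T| = y,
   the coefficient of z^a, for a in {0,1,2}^n with t twos and o ones, is
   C(o, x - t) if t <= x and x + y = 2t + o, and 0 otherwise: S and T both
   contain the t positions of the twos and share out the o positions of the
   ones.  On the right-hand side, z^a therefore only occurs when m = t + d and
   o = 2d + k for some d, with coefficient sum_(i <= d) c_i C(2d + k, d - i).
   This is 1 for d = 0, and 0 for d > 0 because d times its partial sums
   telescope to (-1)^p (d - p) C(k + p, p) C(2d + k, d - p). *)

(* The coefficient c_i of e_(m-i) e_(m+k+i); at i = 0 the paper's formula
   would give k / 0 = 0 here instead of the leading coefficient 1. *)
Definition ecoef (k i : nat) : rat :=
  if i is j.+1 then (-1) ^+ i * ((k + 2 * i)%:R / i%:R * 'C(k + j, j)%:R)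
  else 1.

Lemma ecoef_binom_telescope k p q :
  (p + q)%:R * \sum_(i < p.+1) ecoef k i * 'C(2 * (p + q) + k, p + q - i)%:R =
  (-1) ^+ p * q%:R * 'C(k + p, p)%:R * 'C(2 * (p + q) + k, q)%:R.
Proof.
elim: p q => [|p IHp] q.
  by rewrite big_ord1 /= !add0n subn0 bin0 expr0 !mul1r mulr1.
rewrite big_ord_recr /= mulrDr addSnnS IHp -addSnnS addKn.
set N := (2 * _ + k)%N.
have binN : (q.+1 * 'C(N, q.+1) = (2 * p.+1 + q + k) * 'C(N, q))%N.
  by rewrite mul_bin_left; congr (_ * _)%N; rewrite /N; lia.
have binK : ((k + p).+1 * 'C(k + p, p) = p.+1 * 'C(k + p.+1, p.+1))%N.
  by rewrite addnS -mul_bin_diag.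
have nz (r : nat) : r.+1%:R != 0 :> rat by rewrite pnatr_eq0.
have -> : 'C(N, q.+1)%:R = (2 * p.+1 + q + k)%:R * 'C(N, q)%:R / q.+1%:R :> rat.
  by rewrite -natrM -binN natrM mulrAC divff ?mul1r.
have -> : 'C(k + p.+1, p.+1)%:R
          = (k + p).+1%:R * 'C(k + p, p)%:R / p.+1%:R :> rat.
  by rewrite -natrM binK natrM mulrAC divff ?mul1r.
move: (nz p) (nz q).
rewrite -[p.+1%:R]natr1 -[q.+1%:R]natr1 -[(k + p).+1%:R]natr1.
rewrite !natrD !natrM exprS => hp hq; field.
by rewrite hp hq.
Qed.

Lemma ecoef_binom_sum k d :
  \sum_(i < d.+1) ecoef k i * 'C(2 * d + k, d - i)%:R = (d == 0%N)%:R.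
Proof.
case: d => [|d]; first by rewrite big_ord1 /= mul1r bin0.
have := ecoef_binom_telescope k d.+1 0; rewrite !addn0 mulr0 !mul0r => /eqP.
by rewrite mulf_eq0 pnatr_eq0 => /eqP.
Qed.

Lemma sum_ecoef (V : lmodType rat) k m (F : nat -> V) :
  \sum_(i < m.+1) ecoef k i *: F i =
  F 0%N + \sum_(1 <= i < m.+1)
    ((-1) ^+ i * ((k + 2 * i)%:R / i%:R * 'C(k + i - 1, i - 1)%:R)) *: F i.
Proof.
rewrite big_add1 /= big_mkord big_ord_recl scale1r.
by congr (_ + _); apply: eq_bigr => i _; rewrite addnS !subn1.
Qed.

Section ExponentVectors.

Variable n : nat.
Implicit Types (a : {ffun 'I_n -> 'I_3}) (S T U : {set 'I_n}).

Definition twos a := [set j | val (a j) == 2%N].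
Definition ones a := [set j | val (a j) == 1%N].

Definition char_sum S T : {ffun 'I_n -> 'I_3} :=
  [ffun j => inord ((j \in S) + (j \in T))].

Definition split_ones a U := (twos a :|: U, twos a :|: (ones a :\: U)).

Definition npairs (x y : nat) a :=
  #|[set p : {set 'I_n} * {set 'I_n} |
      [&& #|p.1| == x, #|p.2| == y & char_sum p.1 p.2 == a]]|.

Lemma char_sumE S T j : val (char_sum S T j) = ((j \in S) + (j \in T))%N.
Proof. by rewrite ffunE /= inordK //; case: (j \in S); case: (j \in T). Qed.

Lemma char_sum_split a U : U \subset ones a ->
  char_sum (split_ones a U).1 (split_ones a U).2 = a.
Proof.
move=> /subsetP sUo; apply/ffunP => j; apply/val_inj; rewrite char_sumE !inE.
have := sUo j; rewrite !inE.
by case: (a j) => [[|[|[|v]]] lt_v3] //=; case: (j \in U) => // /(_ isT).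
Qed.

Lemma split_ones_char_sum S T :
  split_ones (char_sum S T) (S :&: ones (char_sum S T)) = (S, T).
Proof.
by congr (_, _); apply/setP => j; rewrite !inE !char_sumE;
  case: (j \in S); case: (j \in T).
Qed.

Lemma disjoint_twos_ones a : [disjoint twos a & ones a].
Proof. by apply/pred0P => j; rewrite !inE; case: (val (a j)) => [|[|[|]]]. Qed.

Lemma split_onesK a U : U \subset ones a -> (split_ones a U).1 :&: ones a = U.
Proof.
move=> sUo; rewrite setIUl (disjoint_setI0 (disjoint_twos_ones a)) set0U.
exact/setIidPl.
Qed.

Lemma split_ones_inj a :
  {in [pred U : {set 'I_n} | U \subset ones a] &, injective (split_ones a)}.
Proof.
move=> U1 U2 sU1o sU2o eqU.
by rewrite -(split_onesK sU1o) -(split_onesK sU2o) eqU.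
Qed.

Lemma card_split_ones a U : U \subset ones a ->
  #|(split_ones a U).1| = (#|twos a| + #|U|)%N /\
  #|(split_ones a U).2| = (#|twos a| + (#|ones a| - #|U|))%N.
Proof.
move=> sUo; have tw_o := disjoint_twos_ones a.
have tU0 : twos a :&: U = set0.
  by apply/disjoint_setI0; apply: disjointWr sUo tw_o.
have tD0 : twos a :&: (ones a :\: U) = set0.
  by apply/disjoint_setI0; apply: disjointWr (subsetDl _ _) tw_o.
rewrite !cardsU tU0 tD0 cardsD (setIidPr sUo).
by rewrite cards0 !subn0.
Qed.

Lemma npairs_split x y a :
  npairs x y a = #|[set U : {set 'I_n} | U \subset ones a &
    ((#|twos a| + #|U| == x) && (#|twos a| + (#|ones a| - #|U|) == y))%N]|.
Proof.
set D := [set U : {set 'I_n} | U \subset ones a &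
  (#|(split_ones a U).1| == x) && (#|(split_ones a U).2| == y)].
have -> : npairs x y a = #|split_ones a @: D|.
  apply: eq_card => p; rewrite !inE; apply/idP/imsetP => [|[U]].
    case/and3P=> cSx cTy /eqP ea; exists (p.1 :&: ones a).
      by rewrite inE subsetIr -ea split_ones_char_sum /= cSx cTy.
    by rewrite -ea split_ones_char_sum -surjective_pairing.
  by rewrite inE => /andP[sUo cU] ->; rewrite andbA cU char_sum_split // eqxx.
rewrite card_in_imset; last first.
  by apply: sub_in2 (@split_ones_inj a) => U; rewrite !inE => /andP[].
apply: eq_card => U; rewrite !inE.
by case sUo: (U \subset ones a) => //=; have [-> ->] := card_split_ones sUo.
Qed.

Lemma npairsE x y a :
  npairs x y a =
  if ((#|twos a| <= x) && (x + y == 2 * #|twos a| + #|ones a|))%N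
  then 'C(#|ones a|, x - #|twos a|) else 0%N.
Proof.
rewrite npairs_split; case: ifP => [/andP[le_tx /eqP exy] | cond].
  rewrite -cards_draws; apply: eq_card => U; rewrite !inE.
  case sUo: (U \subset ones a) => //=; move: (subset_leq_card sUo) le_tx exy.
  by move: #|U| #|ones a| #|twos a| => u o t; lia.
apply/eqP; rewrite cards_eq0; apply/eqP/setP => U; rewrite !inE.
case sUo: (U \subset ones a) => //=; move: (subset_leq_card sUo) cond.
by move: #|U| #|ones a| #|twos a| => u o t; lia.
Qed.

End ExponentVectors.

Section Monomials.

Variables (R : comRingType) (n : nat).

Definition Xpow (a : {ffun 'I_n -> 'I_3}) : {mpoly R[n]} :=
  \prod_(j < n) 'X_j ^+ val (a j).

Lemma prodX_set (S : {set 'I_n}) :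
  \prod_(i in S) 'X_i = \prod_(j < n) 'X_j ^+ (j \in S) :> {mpoly R[n]}.
Proof.
rewrite big_mkcond /=; apply: eq_bigr => j _.
by case: (j \in S); rewrite ?expr1 ?expr0.
Qed.

Lemma prodXM_char_sum (S T : {set 'I_n}) :
  (\prod_(i in S) 'X_i) * (\prod_(i in T) 'X_i) = Xpow (char_sum S T).
Proof.
rewrite !prodX_set -big_split; apply: eq_bigr => j _.
by rewrite char_sumE exprD.
Qed.

Lemma mesymM x y :
  mesym n R x * mesym n R y = \sum_a (npairs x y a)%:R *: Xpow a.
Proof.
rewrite /mesym mulr_suml; under eq_bigr do rewrite mulr_sumr.
rewrite pair_big /=; under eq_bigr do rewrite prodXM_char_sum.
rewrite (partition_big (fun p => char_sum p.1 p.2) xpredT) //=.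
apply: eq_bigr => a _; rewrite scaler_nat -sumr_const /npairs.
by apply: eq_big => [p | p /andP[_ /eqP ->]] //; rewrite inE andbA.
Qed.

End Monomials.

Lemma ecoef_npairs_sum n m k (a : {ffun 'I_n -> 'I_3}) :
  \sum_(i < m.+1) ecoef k i * (npairs (m - i) (m + k + i) a)%:R =
  ((#|twos a| == m) && (#|ones a| == k))%:R.
Proof.
under eq_bigr => i _.
  rewrite npairsE (_ : (m - i + (m + k + i) = 2 * m + k)%N); last first.
    by have := ltn_ord i; lia.
  over.
move: #|twos a| #|ones a| => t o /=.
have [e_mt|ne_mt] := eqVneq (2 * m + k)%N (2 * t + o)%N; last first.
  rewrite big1 => [|i _]; last by rewrite andbF mulr0.
  suff /negbTE -> : ~~ ((t == m) && (o == k)) by [].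
  by apply: contra ne_mt => /andP[/eqP-> /eqP->].
have [lt_mt | le_tm] := ltnP m t.
  rewrite big1 => [|i _]; first by rewrite gtn_eqF.
  by rewrite leqNgt (leq_ltn_trans (leq_subr _ _) lt_mt) mulr0.
have [d def_m] : exists d, m = (t + d)%N by exists (m - t)%N; rewrite subnKC.
have def_o : o = (2 * d + k)%N by lia.
have -> : (t == m) && (o == k) = (d == 0%N).
  by rewrite def_m def_o; lia.
rewrite def_m def_o -(ecoef_binom_sum k d).
rewrite (big_ord_widen m.+1 (fun i => ecoef k i * 'C(2 * d + k, d - i)%:R));
  last by lia.
rewrite [RHS]big_mkcond def_m /=; apply: eq_bigr => i _.
rewrite andbT subnAC addKn (_ : (t <= t + d - i) = (i < d.+1))%N; last first.
  by have := ltn_ord i; lia.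
by case: ifP; rewrite ?mulr0.
Qed.

Theorem lemma3p3 (n : nat) (hn : (1 <= n)%N) (m k : nat) :
  monomial2 m k n =
    e n m * e n (m + k) +
    \sum_(1 <= i < m.+1)
      ((-1) ^+ i * ((k + 2 * i)%:R / i%:R * ('C(k + i - 1, i - 1))%:R : rat))
        *: (e n (m - i) * e n (m + k + i)).
Proof.
have := sum_ecoef k m (fun i => e n (m - i) * e n (m + k + i)).
rewrite /= subn0 addn0 => <-.
under eq_bigr do rewrite /e mesymM scaler_sumr.
rewrite exchange_big /monomial2 big_mkcond; apply: eq_bigr => a _ /=.
under [RHS]eq_bigr do rewrite scalerA.
rewrite -scaler_suml ecoef_npairs_sum /twos /ones.
by case: ifP; rewrite ?scale1r ?scale0r.
Qed.
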